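(* Let $R$ be a tolerance relation on $\{1,\ldots,n\}$ and $T(b)=\sum_{(i,j)\in R}E_{ii}bE_{jj}$ for $b\in M_n(\mathbb{C})$. If $\rho\in M_n(\mathbb{C})$ is a density matrix, $v\in\mathbb{C}^n$ is an $R$-tolerant unit vector, and $T(\rho)=T(P_v)$, then $\rho=P_v$.
   Context: A tolerance relation is a reflexive and symmetric relation; its graph has an edge between $i\neq j$ whenever $(i,j)\in R$. $E_{ij}$ are the matrix units, so $T$ sets to zero all entries in positions $(i,j)\notin R$. A density matrix is a positive semidefinite matrix with trace $1$. For a unit vector $v$, $P_v=(v_i\overline{v_j})_{i,j}$. For non-zero $v$, $R_v:=\{(i,j)\in R:v_iv_j\ne0\}$, a tolerance relation on $\{i:v_i\ne0\}$; $v$ is $R$-tolerant if the graph of $R_v$ is connected. *)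

From HB Require Import structures.
From mathcomp Require Import all_boot all_order all_algebra.
From mathcomp Require Import complex.
From mathcomp Require Import reals.
Set Implicit Arguments. Unset Strict Implicit. Unset Printing Implicit Defensive.
Import Order.TTheory GRing.Theory Num.Theory.
Local Open Scope ring_scope.
Local Open Scope complex_scope.

Definition tolerance (n : nat) (R : rel 'I_n) : Prop :=
  reflexive R /\ symmetric R.

Definition E {C : nzRingType} {n : nat} (i j : 'I_n) : 'M[C]_n := delta_mx i j.

Definition Tmap {C : nzRingType} {n : nat} (R : rel 'I_n) (b : 'M[C]_n) : 'M[C]_n :=
  \sum_(i < n) \sum_(j < n | R i j) (E i i *m b *m E j j).

Definition adjmx {C : numClosedFieldType} {m n : nat} (A : 'M[C]_(m, n)) : 'M[C]_(n, m) :=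
  (map_mx Num.conj A)^T.

Definition psd {C : numClosedFieldType} {n : nat} (A : 'M[C]_n) : Prop :=
  adjmx A = A /\ forall x : 'cV[C]_n, 0 <= (adjmx x *m A *m x) 0 0.

Definition density {C : numClosedFieldType} {n : nat} (A : 'M[C]_n) : Prop :=
  psd A /\ \tr A = 1.

Definition unit_vec {C : numClosedFieldType} {n : nat} (v : 'cV[C]_n) : Prop :=
  \sum_(i < n) `|v i 0| ^+ 2 = 1.

Definition Pv {C : numClosedFieldType} {n : nat} (v : 'cV[C]_n) : 'M[C]_n :=
  \matrix_(i, j) (v i 0 * Num.conj (v j 0)).

Definition Rv {C : numClosedFieldType} {n : nat} (R : rel 'I_n) (v : 'cV[C]_n) : rel 'I_n :=
  [rel i j | [&& R i j, v i 0 != 0 & v j 0 != 0]].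

Definition tolerant {C : numClosedFieldType} {n : nat} (R : rel 'I_n) (v : 'cV[C]_n) : Prop :=
  v != 0 /\ forall i j : 'I_n, v i 0 != 0 -> v j 0 != 0 -> connect (Rv R v) i j.

From HB Require Import structures.
From mathcomp Require Import all_boot all_order all_algebra.
From mathcomp Require Import complex.
From mathcomp Require Import reals.
From mathcomp Require Import ring.
Set Implicit Arguments. Unset Strict Implicit. Unset Printing Implicit Defensive.
Import Order.TTheory GRing.Theory Num.Theory.
Local Open Scope ring_scope.

(* On an edge {i, j} of R_v the 2 x 2 block of rho is that of the rank-one   *)
(* matrix P_v, so conj(v_j) e_i - conj(v_i) e_j is isotropic for rho; for a   *)
(* positive semidefinite matrix isotropic vectors lie in the kernel, whence   *)
(* conj(v_j) rho_ki = conj(v_i) rho_kj.  Thus rho_kp / conj(v_p) is constant  *)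
(* along the edges of R_v, hence on the connected support of v, where it is   *)
(* v_k.  Off the support rho_pp = 0, which kills the p-th row and column.     *)

Lemma connect_invariant (T : finType) (U : eqType) (e : rel T) (f : T -> U) :
  (forall x y, e x y -> f x = f y) -> forall x y, connect e x y -> f x = f y.
Proof.
move=> ef x y xy; apply/eqP.
have cl : closed e [pred z | f x == f z] by move=> z t /ef; rewrite !inE => ->.
by rewrite -[_ == _]/(y \in [pred z | f x == f z]) -(closed_connect cl xy) inE.
Qed.

Section MatrixUnits.
Variable K : nzRingType.

Lemma delta_mul_mx_delta m n (A : 'M[K]_(m, n)) i j :
  delta_mx 0 i *m A *m delta_mx j 0 = (A i j)%:M :> 'M[K]_1.
Proof. by rewrite -rowE -colE [LHS]mx11_scalar !mxE. Qed.

Lemma E_mul_mx_E n (b : 'M[K]_n) i j : E i i *m b *m E j j = b i j *: E i j.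
Proof.
rewrite /E -(mul_delta_mx (0 : 'I_1) i i) -(mul_delta_mx (0 : 'I_1) j j).
rewrite !mulmxA -(mulmxA _ (delta_mx 0 i)) -(mulmxA _ (_ *m b)).
rewrite delta_mul_mx_delta -mulmxA mul_scalar_mx; apply/matrixP => k l.
rewrite !mxE big_ord1 !mxE.
by case: (k == i); case: (l == j); rewrite ?mul1r ?mulr1 ?mul0r ?mulr0.
Qed.

Lemma TmapE n (e : rel 'I_n) (b : 'M[K]_n) :
  Tmap e b = \matrix_(k, l) if e k l then b k l else 0.
Proof.
rewrite [RHS]matrix_sum_delta; apply: eq_bigr => i _; rewrite big_mkcond.
by apply: eq_bigr => j _; rewrite E_mul_mx_E mxE; case: (e i j); rewrite ?scale0r.
Qed.
End MatrixUnits.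

Section PsdMatrices.
Variable C : numClosedFieldType.

Definition qform {n} (A : 'M[C]_n) (x : 'cV[C]_n) : C := (adjmx x *m A *m x) 0 0.

Lemma adjmxM m n p (A : 'M[C]_(m, n)) (B : 'M[C]_(n, p)) :
  adjmx (A *m B) = adjmx B *m adjmx A.
Proof. by rewrite /adjmx map_mxM trmx_mul. Qed.

Lemma adjmxD m n (A B : 'M[C]_(m, n)) : adjmx (A + B) = adjmx A + adjmx B.
Proof. by rewrite /adjmx map_mxD linearD. Qed.

Lemma adjmxZ m n a (A : 'M[C]_(m, n)) : adjmx (a *: A) = a^* *: adjmx A.
Proof. by rewrite /adjmx map_mxZ linearZ. Qed.

Lemma adjmx_delta m n (i : 'I_m) (j : 'I_n) :
  adjmx (delta_mx i j : 'M[C]_(m, n)) = delta_mx j i.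
Proof. by rewrite /adjmx map_delta_mx trmx_delta. Qed.

Lemma hermitian_mxE n (A : 'M[C]_n) i j : adjmx A = A -> A i j = (A j i)^*.
Proof. by move=> A_herm; rewrite -[in LHS]A_herm !mxE. Qed.

Lemma adj_mul_selfE n (y : 'cV[C]_n) : (adjmx y *m y) 0 0 = \sum_k `|y k 0| ^+ 2.
Proof. by rewrite mxE; apply: eq_bigr => k _; rewrite !mxE normCKC. Qed.

Lemma adj_mul_self_eq0 n (y : 'cV[C]_n) : (adjmx y *m y) 0 0 = 0 -> y = 0.
Proof.
rewrite adj_mul_selfE => /psumr_eq0P y0; apply/colP => k; rewrite mxE.
by apply/eqP; rewrite -normr_eq0 -sqrf_eq0 y0 // => *; exact/exprn_ge0/normr_ge0.
Qed.

(* With y = A x, s = |y|^2 and a = qform A y, the test vector               *)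
(* (a + 1) x - s y has qform -(a + 2) s^2, which forces s = 0.              *)
Lemma psd_qform_eq0 n (A : 'M[C]_n) x : psd A -> qform A x = 0 -> A *m x = 0.
Proof.
move=> [A_herm A_ge0] Ax0; set y := A *m x.
set s := (adjmx y *m y) 0 0; set a := qform A y.
have s_ge0 : 0 <= s by rewrite /s adj_mul_selfE sumr_ge0 // => *; exact/exprn_ge0/normr_ge0.
have a_ge0 : 0 <= a := A_ge0 y.
have a1_ge0 : 0 <= a + 1 by rewrite addr_ge0.
have xAy : adjmx x *m A *m y = s%:M by rewrite /s /y adjmxM A_herm -mx11_scalar.
have yAx : adjmx y *m A *m x = s%:M by rewrite /s -mulmxA -mx11_scalar.
have xAx : adjmx x *m A *m x = 0%:M by rewrite -Ax0 -mx11_scalar.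
have yAy : adjmx y *m A *m y = a%:M by rewrite -mx11_scalar.
have : qform A ((a + 1) *: x + (- s) *: y) = - ((a + 2) * s ^+ 2).
  rewrite /qform adjmxD !adjmxZ !mulmxDl !mulmxDr -!scalemxAl -!scalemxAr.
  by rewrite xAy yAx xAx yAy rmorphN /= !geC0_conj // !mxE eqxx !mulr1n; ring.
move=> qz; have := A_ge0 ((a + 1) *: x + (- s) *: y).
rewrite [X in 0 <= X]qz oppr_ge0 pmulr_rle0 ?ltr_wpDl ?a_ge0 // => s2_le0.
apply: adj_mul_self_eq0; apply/eqP; rewrite -/s -sqrf_eq0.
by rewrite eq_le s2_le0 exprn_ge0.
Qed.

Lemma psd_col_eq0 n (A : 'M[C]_n) i : psd A -> A i i = 0 -> col i A = 0.
Proof.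
move=> A_psd Aii0; rewrite colE; apply: psd_qform_eq0 => //.
by rewrite /qform adjmx_delta delta_mul_mx_delta mxE eqxx mulr1n.
Qed.

Lemma qform_pair n (A : 'M[C]_n) i j a b :
  qform A (a *: delta_mx i 0 + b *: delta_mx j 0) =
  a^* * a * A i i + a^* * b * A i j + b^* * a * A j i + b^* * b * A j j.
Proof.
rewrite /qform adjmxD !adjmxZ !adjmx_delta !mulmxDl !mulmxDr -!scalemxAl -!scalemxAr.
by rewrite !delta_mul_mx_delta !mxE eqxx !mulr1n !mulrA !addrA.
Qed.

Lemma psd_cols_proportional n (A : 'M[C]_n) (u : 'I_n -> C) i j : psd A ->
    {in pred2 i j &, forall p q, A p q = u p * (u q)^*} ->
  (u j)^* *: col i A = (u i)^* *: col j A.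
Proof.
move=> A_psd A_ij.
have : A *m ((u j)^* *: delta_mx i 0 + (- (u i)^*) *: delta_mx j 0 : 'cV_n) = 0.
  apply: psd_qform_eq0 => //; rewrite qform_pair !A_ij ?inE ?eqxx ?orbT //.
  by rewrite rmorphN /= !conjCK; ring.
by rewrite mulmxDr -!scalemxAr -!colE scaleNr => /eqP; rewrite subr_eq0 => /eqP.
Qed.
End PsdMatrices.

Local Open Scope complex_scope.

Theorem lemma4p13 (Rl : realType) (n : nat) (R : rel 'I_n)
    (rho : 'M[Rl[i]]_n) (v : 'cV[Rl[i]]_n) :
  tolerance R -> density rho -> unit_vec v -> tolerant R v ->
  Tmap R rho = Tmap R (Pv v) -> rho = Pv v.
Proof.
move=> [R_refl R_sym] [rho_psd _] _ [_ v_conn] HT.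
have rho_R k l : R k l -> rho k l = v k 0 * (v l 0)^*.
  by move=> Rkl; move/matrixP/(_ k l): HT; rewrite !TmapE !mxE Rkl.
have rho_col0 l : v l 0 = 0 -> col l rho = 0.
  by move=> vl0; apply: psd_col_eq0; rewrite // rho_R // vl0 mul0r.
apply/matrixP => k l; rewrite mxE.
have [vl0|vl] := eqVneq (v l 0) 0.
  by move/colP/(_ k): (rho_col0 l vl0); rewrite !mxE vl0 conjC0 mulr0.
have [vk0|vk] := eqVneq (v k 0) 0.
  move/colP/(_ l): (rho_col0 k vk0); rewrite !mxE vk0 mul0r => rho_lk0.
  by rewrite (hermitian_mxE k l rho_psd.1) rho_lk0 conjC0.
pose ratio p := rho k p / (v p 0)^*.
have ratio_edge p q : Rv R v p q -> ratio p = ratio q.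
  case/and3P => Rpq vp vq; apply/eqP; rewrite eqr_div ?conjC_eq0 //.
  have block : {in pred2 p q &, forall p' q', rho p' q' = v p' 0 * (v q' 0)^*}.
    by move=> ? ? /pred2P[]-> /pred2P[]->; apply: rho_R; rewrite ?R_refl // R_sym.
  move/colP/(_ k): (psd_cols_proportional (u := fun p => v p 0) rho_psd block).
  by rewrite !mxE mulrC => ->; rewrite mulrC.
have := connect_invariant ratio_edge (v_conn k l vk vl).
by rewrite /ratio rho_R // mulfK ?conjC_eq0 // => ->; rewrite divfK ?conjC_eq0.
Qed.
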